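(* Let $Y_1,Y_2$ be real random variables with absolutely continuous distributions, c.d.f.'s $F_1,F_2$ and (unique) copula $C$ of $(Y_1,Y_2)$, and let $D$ be the set of all probability measures on $\mathbb R$. Put $\Delta(u)=F_1(u)+F_2(u)-2C(F_1(u),F_2(u))$, $u\in\mathbb R$. Then there exists $u^*\in\arg\max_{u\in\mathbb R}\Delta(u)$, and $$\max_{m\in D}E_m(Y_1,Y_2)=\Delta(u^* )=E_{\delta_{u^*}}(Y_1,Y_2),$$ i.e. the maximum over $D$ is attained at the Dirac measure $\delta_{u^*}$ (whose c.d.f. is $x\mapsto\mathbb 1\{u^*\le x\}$). If additionally $Y_1\stackrel{d}{=}Y_2$, then $$\max_{m\in D}E_m(Y_1,Y_2)=2\max_{x\in[0,1]}\big(x-C(x,x)\big),$$ and if $x^*\in(0,1)$ is a maximizer of $x\mapsto x-C(x,x)$ on $[0,1]$, the maximum is attained at $m=\delta_{u^*}$ with $u^*=F_1^{-1}(x^* )$.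
   Context: For a finite nonnegative measure $m$ on $\mathbb R$ and real random variables $Y_1,Y_2$, the excursion metric is $$E_m(Y_1,Y_2):=\int_{\mathbb R}\big(\mathbb P(Y_1>u)+\mathbb P(Y_2>u)-2\,\mathbb P(Y_1>u,Y_2>u)\big)\,m(du).$$ *)

From HB Require Import structures.
From mathcomp Require Import all_boot all_order all_algebra.
From mathcomp Require Import all_classical all_reals all_analysis.
Set Implicit Arguments. Unset Strict Implicit. Unset Printing Implicit Defensive.
Import Order.TTheory GRing.Theory Num.Theory.
Local Open Scope classical_set_scope.
Local Open Scope ring_scope.

Definition cdfR d (T : measurableType d) (R : realType) (P : probability T R)
  (Y : {RV P >-> R}) (u : R) : R := fine (cdf Y u).

Definition is_copula (R : realType) (C : R -> R -> R) : Prop :=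
  (forall u v, 0 <= u <= 1 -> 0 <= v <= 1 -> 0 <= C u v <= 1) /\
  (forall u, 0 <= u <= 1 -> C u 0 = 0 /\ C 0 u = 0 /\ C u 1 = u /\ C 1 u = u) /\
  (forall u1 u2 v1 v2, 0 <= u1 -> u1 <= u2 -> u2 <= 1 ->
      0 <= v1 -> v1 <= v2 -> v2 <= 1 ->
      0 <= C u2 v2 - C u2 v1 - C u1 v2 + C u1 v1).

Definition copula_of d (T : measurableType d) (R : realType) (P : probability T R)
  (Y1 Y2 : {RV P >-> R}) (C : R -> R -> R) : Prop :=
  is_copula C /\
  forall a b : R, fine (P [set t | Y1 t <= a /\ Y2 t <= b]) = C (cdfR Y1 a) (cdfR Y2 b).

Definition abs_cont_RV d (T : measurableType d) (R : realType) (P : probability T R)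
  (Y : {RV P >-> R}) : Prop :=
  distribution P Y `<< (@lebesgue_measure R).

Definition excursion_integrand d (T : measurableType d) (R : realType)
  (P : probability T R) (Y1 Y2 : {RV P >-> R}) (u : R) : R :=
  fine (P [set t | u < Y1 t]) + fine (P [set t | u < Y2 t])
  - 2 * fine (P [set t | u < Y1 t /\ u < Y2 t]).

Definition excursion_metric d (T : measurableType d) (R : realType)
  (P : probability T R) (Y1 Y2 : {RV P >-> R}) (m : {measure set R -> \bar R})
  : \bar R :=
  (\int[m]_u (excursion_integrand Y1 Y2 u)%:E)%E.

Definition Delta d (T : measurableType d) (R : realType) (P : probability T R)
  (Y1 Y2 : {RV P >-> R}) (C : R -> R -> R) (u : R) : R :=
  cdfR Y1 u + cdfR Y2 u - 2 * C (cdfR Y1 u) (cdfR Y2 u).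

Definition quantile (R : realType) (F : R -> R) (x : R) : R :=
  inf [set u | x <= F u].

From HB Require Import structures.
From mathcomp Require Import all_boot all_order all_algebra.
From mathcomp Require Import all_classical all_reals all_analysis.
From mathcomp Require Import lra measurable_realfun.
Import Order.TTheory GRing.Theory Num.Theory.
Import numFieldTopology.Exports numFieldNormedType.Exports.
Set Implicit Arguments. Unset Strict Implicit. Unset Printing Implicit Defensive.
Local Open Scope classical_set_scope.
Local Open Scope ring_scope.

(* The excursion integrand at level u is the probability that exactly one of
   Y1, Y2 exceeds u, i.e. P(Y1 <= u < Y2) + P(Y2 <= u < Y1), and by Sklar's
   identity this is Delta(u).  Without atoms, Delta = F1 + F2 - 2 G, with G the
   c.d.f. of max(Y1, Y2), is continuous, nonnegative and vanishes at +-oo, so it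
   attains its maximum at some u*.  Integrating Delta against a probability
   measure can only lower this value, and the Dirac mass at u* attains it.  When
   Y1 and Y2 have the same law F, Delta = 2 (F - C(F, F)), and F takes every
   value x in (0,1), at u = F^{-1}(x); hence maximizing Delta over R is
   maximizing x - C(x, x) over [0,1]. *)

Section real_functions.
Variable R : realType.

Lemma vanishing_at_infty_has_max (f : R -> R) u0 : continuous f ->
  f @ +oo --> 0 -> f @ -oo --> 0 -> 0 <= f u0 ->
  exists c, forall u, f u <= f c.
Proof.
move=> fc fy fNy fu0.
have [[u1 fu1]|] := pselect (exists u1, 0 < f u1); last first.
  move=> nopos; exists u0 => u; apply: le_trans fu0; rewrite leNgt.
  by apply/negP => fu; apply: nopos; exists u.
have [M1 [_ hM1]] := cvgr_lt 0 fy _ fu1.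
have [M2 [_ hM2]] := cvgr_lt 0 fNy _ fu1.
have au1 : Num.min M2 u1 <= u1 by rewrite ge_min lexx orbT.
have u1b : u1 <= Num.max M1 u1 by rewrite le_max lexx orbT.
have [c _ cmax] := EVT_max (le_trans au1 u1b) (continuous_subspaceT fc).
have fu1c : f u1 <= f c by apply: cmax; rewrite in_itv /= au1 u1b.
exists c => u; have [ua|au] := ltP u (Num.min M2 u1).
  by apply/ltW/(lt_le_trans _ fu1c)/hM2; move: ua; rewrite lt_min => /andP[].
have [bu|ub] := ltP (Num.max M1 u1) u.
  by apply/ltW/(lt_le_trans _ fu1c)/hM1; move: bu; rewrite gt_max => /andP[].
by apply: cmax; rewrite in_itv /= au ub.
Qed.

Lemma continuous_quantileK (F : R -> R) (x a b : R) : continuous F ->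
  {homo F : u v / u <= v} -> F a < x -> x <= F b -> F (quantile F x) = x.
Proof.
move=> Fc Fm Fa Fb; rewrite /quantile; set S := [set u | x <= F u].
have S0 : S !=set0 by exists b.
have lbS : has_lbound S.
  exists a => u Su; rewrite leNgt; apply/negP => ua.
  by have := Fm _ _ (ltW ua); rewrite /S /= in Su; lra.
set q := inf S; apply/eqP; rewrite eq_le; apply/andP; split.
  rewrite leNgt; apply/negP => xFq.
  have [e /= e0 he] : nbhs_ball q (fun y => x < F y).
    by apply/nbhs_ballP; exact: cvgr_gt _ (Fc q) _ xFq.
  have : S (q - e / 2).
    apply/ltW/he; rewrite /ball /= (_ : q - (q - e / 2) = e / 2); last lra.
    by rewrite ger0_norm; lra.
  by move/(ge_inf lbS); rewrite -/q; lra.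
rewrite leNgt; apply/negP => Fqx.
have [e /= e0 he] : nbhs_ball q (fun y => F y < x).
  by apply/nbhs_ballP; exact: cvgr_lt _ (Fc q) _ Fqx.
suff : q + e / 2 <= q by lra.
apply: lb_le_inf S0 _ => u Su; rewrite leNgt; apply/negP => ltu.
have qu : q <= u := ge_inf lbS Su.
have : F u < x by apply: he; rewrite /ball /= ler0_norm; lra.
by rewrite /S /= in Su; lra.
Qed.

End real_functions.

Section probability_lemmas.
Context d (T : measurableType d) (R : realType) (mu : probability T R).

Lemma probability_integral_le_bound (f : T -> R) (M : R) : measurable_fun setT f ->
  (forall x, 0 <= f x) -> (forall x, f x <= M) ->
  (\int[mu]_x (f x)%:E <= M%:E)%E.
Proof.
move=> mf f0 fM; apply: (@le_trans _ _ (\int[mu]_x (cst M%:E x))%E).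
  apply: ge0_le_integral => //.
  - by move=> x _; rewrite lee_fin.
  - exact/measurable_EFinP.
  - by move=> x _; rewrite lee_fin.
by rewrite integral_cst //= probability_setT mule1.
Qed.

Lemma probability_symdiffE (A B : set T) : measurable A -> measurable B ->
  fine (mu A) + fine (mu B) - 2 * fine (mu (A `&` B)) =
  fine (mu (A `\` B)) + fine (mu (B `\` A)).
Proof.
have splitI X Y : measurable X -> measurable Y ->
    fine (mu X) = fine (mu (X `\` Y)) + fine (mu (X `&` Y)).
  move=> mX mY; rewrite (measureDI mu mX mY) fineD //; apply: fin_num_measure.
    exact: measurableD.
  exact: measurableI.
move=> mA mB; rewrite (splitI A B) // (splitI B A) // setIC; lra.
Qed.

End probability_lemmas.

Section random_variables.
Context d (T : measurableType d) (R : realType) (P : probability T R).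
Implicit Types X Y : {RV P >-> R}.

Definition atomless X := forall u, P (X @^-1` [set u]) = 0%E.

Lemma abs_cont_atomless X : abs_cont_RV X -> atomless X.
Proof.
move=> acX u; apply: (acX [set u]) => //.
by apply/measure0_null_setP; [exact: measurable_set1|exact: lebesgue_measure_set1].
Qed.

Lemma atomless_max X Y : atomless X -> atomless Y -> atomless (X \max Y).
Proof.
move=> naX naY u; apply/eqP; rewrite eq_le measure_ge0 andbT.
have mXu : measurable (X @^-1` [set u]) by apply: measurable_funPTI; exact: measurable_set1.
have mYu : measurable (Y @^-1` [set u]) by apply: measurable_funPTI; exact: measurable_set1.
apply: (@le_trans _ _ (P (X @^-1` [set u] `|` Y @^-1` [set u]))).
  apply: le_measure; rewrite ?inE.
  - by apply: measurable_funPTI; exact: measurable_set1.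
  - exact: measurableU.
  by move=> t /=; case: (leP (X t) (Y t)) => _ ->; [right|left].
by apply: le_trans (measureU2 P mXu mYu) _; rewrite /= naX naY adde0.
Qed.

Lemma cdfE X r : cdf X r = P [set t | X t <= r].
Proof. by congr (P _); apply/seteqP; split=> t /=; rewrite in_itv. Qed.

Lemma cdfRE X r : cdfR X r = fine (P [set t | X t <= r]).
Proof. by rewrite /cdfR cdfE. Qed.

Lemma cdfR_ge0_le1 X r : 0 <= cdfR X r <= 1.
Proof. by rewrite fine_ge0 //= -lee_fin fineK ?cdf_le1 // fin_num_measure. Qed.

Lemma cdfR_nondecreasing X : {homo cdfR X : x y / x <= y}.
Proof.
by move=> x y xy; apply: fine_le; rewrite ?fin_num_measure //; exact: cdf_nondecreasing.
Qed.

Lemma cvg_cdfRy1 X : cdfR X @ +oo --> (1 : R).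
Proof. exact: fine_cvg (cvg_cdfy1 X). Qed.

Lemma cvg_cdfRNy0 X : cdfR X @ -oo --> (0 : R).
Proof. exact: fine_cvg (cvg_cdfNy0 X). Qed.

Lemma cdfR_max X Y r :
  cdfR (P := P) (X \max Y) r = fine (P ([set t | X t <= r] `&` [set t | Y t <= r])).
Proof.
by rewrite cdfRE; congr (fine (P _)); apply/seteqP; split=> t /=; rewrite ge_max => /andP.
Qed.

Lemma measurable_RV_le X r : measurable [set t | X t <= r].
Proof.
rewrite (_ : [set t | X t <= r] = X @^-1` `]-oo, r]); first exact: measurable_funPTI.
by apply/seteqP; split=> t /=; rewrite in_itv.
Qed.

Lemma atomless_cdf_lt X r : atomless X -> cdf X r = P [set t | X t < r].
Proof.
move=> naX; have mXr : measurable (X @^-1` [set r]).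
  by apply: measurable_funPTI; exact: measurable_set1.
rewrite cdfE (measureDI P (measurable_RV_le X r) mXr).
rewrite [X in (_ + X)%E](_ : _ = 0%E) ?adde0; last first.
  apply/eqP; rewrite eq_le measure_ge0 andbT -(naX r) le_measure ?inE //.
  exact: measurableI (measurable_RV_le X r) mXr.
congr (P _); apply/seteqP; split=> t /=; rewrite lt_def eq_sym.
  by case=> -> /eqP ->.
by case/andP=> /eqP ? ->.
Qed.

Lemma atomless_cdfR_continuous X : atomless X -> continuous (cdfR X).
Proof.
move=> naX a; apply/left_right_continuousP; split; last first.
  by apply: fine_cvg; rewrite fineK ?fin_num_measure //; exact: cdf_right_continuous.
have cdf_ccdfN r : cdf X r = ccdf (P := P) (\- X) (- r).
  rewrite atomless_cdf_lt //; congr (P _).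
  by apply/seteqP; split=> t /=; rewrite in_itv /= andbT ltrN2.
apply/cvg_at_leftNP; rewrite /cdfR cdf_ccdfN.
have -> : cdfR X \o -%R = fine \o ccdf (P := P) (\- X).
  by apply/funext => s /=; rewrite /cdfR cdf_ccdfN opprK.
apply: fine_cvg; rewrite fineK ?fin_num_measure //; exact: ccdf_right_continuous.
Qed.

Lemma atomless_cdfR_quantileK X x : atomless X -> 0 < x < 1 ->
  cdfR X (quantile (cdfR X) x) = x.
Proof.
move=> naX /andP[x0 x1].
have [a [_ Fa]] := cvgr_lt 0 (cvg_cdfRNy0 X) _ x0.
have [b [_ Fb]] := cvgr_gt 1 (cvg_cdfRy1 X) _ x1.
apply: (@continuous_quantileK _ _ _ (a - 1) (b + 1)).
- exact: atomless_cdfR_continuous.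
- exact: cdfR_nondecreasing.
- by apply: Fa; lra.
- by apply/ltW/Fb; lra.
Qed.

End random_variables.

Section excursion_metric.
Context d (T : measurableType d) (R : realType) (P : probability T R).
Variables (Y1 Y2 : {RV P >-> R}) (C : R -> R -> R).
Hypotheses (na1 : atomless Y1) (na2 : atomless Y2) (hC : copula_of Y1 Y2 C).

Lemma Delta_symdiff u : Delta Y1 Y2 C u =
  fine (P ([set t | Y1 t <= u] `\` [set t | Y2 t <= u])) +
  fine (P ([set t | Y2 t <= u] `\` [set t | Y1 t <= u])).
Proof.
rewrite /Delta -(proj2 hC) !cdfRE.
exact: probability_symdiffE (measurable_RV_le _ _) (measurable_RV_le _ _).
Qed.

Lemma excursion_integrand_Delta : excursion_integrand Y1 Y2 = Delta Y1 Y2 C.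
Proof.
apply/funext => u; rewrite Delta_symdiff /excursion_integrand.
have gtE (Y : {RV P >-> R}) : [set t | u < Y t] = ~` [set t | Y t <= u].
  by apply/seteqP; split=> t /=; rewrite ltNge => /negP.
have -> : [set t | u < Y1 t /\ u < Y2 t] = [set t | u < Y1 t] `&` [set t | u < Y2 t] by [].
rewrite !gtE probability_symdiffE; try exact/measurableC/measurable_RV_le.
by rewrite !setDE !setCK addrC setIC [in X in _ + X]setIC.
Qed.

Lemma Delta_ge0 u : 0 <= Delta Y1 Y2 C u.
Proof. by rewrite Delta_symdiff addr_ge0 // fine_ge0. Qed.

(* C is not assumed continuous: continuity of Delta comes from this formula. *)
Lemma Delta_cdfR_max u : Delta Y1 Y2 C u =
  cdfR Y1 u + cdfR Y2 u - 2 * cdfR (P := P) (Y1 \max Y2) u.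
Proof. by rewrite /Delta cdfR_max -(proj2 hC). Qed.

Lemma Delta_continuous : continuous (Delta Y1 Y2 C).
Proof.
rewrite (funext Delta_cdfR_max) => u.
apply: cvgB; first by apply: cvgD; exact: atomless_cdfR_continuous.
by apply: cvgM; [exact: cvg_cst|exact/atomless_cdfR_continuous/atomless_max].
Qed.

Lemma Delta_has_max : exists us, forall u, Delta Y1 Y2 C u <= Delta Y1 Y2 C us.
Proof.
apply: (@vanishing_at_infty_has_max _ _ 0 Delta_continuous _ _ (Delta_ge0 0)).
  rewrite (funext Delta_cdfR_max) -[X in _ --> X](subrr (1 + 1 : R)).
  apply: cvgB; first exact: cvgD (cvg_cdfRy1 _) (cvg_cdfRy1 _).
  by rewrite -[X in _ --> X](mulr1 2); apply: cvgM; [exact: cvg_cst|exact: cvg_cdfRy1].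
rewrite (funext Delta_cdfR_max) -[X in _ --> X](subrr (0 + 0 : R)).
apply: cvgB; first exact: cvgD (cvg_cdfRNy0 _) (cvg_cdfRNy0 _).
by rewrite addr0 -[X in _ --> X](mulr0 2); apply: cvgM; [exact: cvg_cst|exact: cvg_cdfRNy0].
Qed.

Lemma excursion_metric_le (m : probability R R) M :
  (forall u, Delta Y1 Y2 C u <= M) -> (excursion_metric Y1 Y2 m <= M%:E)%E.
Proof.
rewrite /excursion_metric excursion_integrand_Delta.
apply: probability_integral_le_bound Delta_ge0.
exact: continuous_measurable_fun Delta_continuous.
Qed.

Lemma excursion_metric_dirac u : excursion_metric Y1 Y2 \d_u = (Delta Y1 Y2 C u)%:E.
Proof.
rewrite /excursion_metric excursion_integrand_Delta integral_dirac ?diracT ?mul1e //.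
by apply/measurable_EFinP; exact: continuous_measurable_fun Delta_continuous.
Qed.

Lemma Delta_same_law u : distribution P Y1 = distribution P Y2 ->
  Delta Y1 Y2 C u = 2 * (cdfR Y1 u - C (cdfR Y1 u) (cdfR Y1 u)).
Proof.
by move=> hd; rewrite /Delta [cdfR Y2 u]/cdfR /cdf -hd -/(cdfR Y1 u); lra.
Qed.

Lemma diag_gap_le_Delta_max us : distribution P Y1 = distribution P Y2 ->
  (forall u, Delta Y1 Y2 C u <= Delta Y1 Y2 C us) ->
  forall x, 0 <= x <= 1 -> 2 * (x - C x x) <= Delta Y1 Y2 C us.
Proof.
move=> hd usmax x /andP[x0 x1]; have [_ [Cbnd _]] := proj1 hC.
have [->|x_neq0] := eqVneq x 0.
  by rewrite (Cbnd 0 _).1 ?lexx ?ler01 // subrr mulr0 Delta_ge0.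
have [->|x_neq1] := eqVneq x 1.
  by rewrite (Cbnd 1 _).2.2.1 ?lexx ?ler01 // subrr mulr0 Delta_ge0.
have x01 : 0 < x < 1 by rewrite !lt_neqAle x0 x1 eq_sym x_neq0 x_neq1.
have := usmax (quantile (cdfR Y1) x).
by rewrite Delta_same_law // atomless_cdfR_quantileK.
Qed.

End excursion_metric.

Theorem mainTheorem5 (d : measure_display) (T : measurableType d) (R : realType)
  (P : probability T R) (Y1 Y2 : {RV P >-> R}) (C : R -> R -> R) :
  abs_cont_RV Y1 -> abs_cont_RV Y2 -> copula_of Y1 Y2 C ->
  (exists ustar : R,
      (forall u : R, Delta Y1 Y2 C u <= Delta Y1 Y2 C ustar) /\
      (forall m : probability R R,
          (excursion_metric Y1 Y2 m <= (Delta Y1 Y2 C ustar)%:E)%E) /\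
      excursion_metric Y1 Y2 (\d_ustar) = (Delta Y1 Y2 C ustar)%:E)
  /\
  (distribution P Y1 = distribution P Y2 ->
     (exists xstar : R, 0 <= xstar <= 1 /\
        (forall x : R, 0 <= x <= 1 -> x - C x x <= xstar - C xstar xstar) /\
        (forall m : probability R R,
           (excursion_metric Y1 Y2 m <= (2 * (xstar - C xstar xstar))%:E)%E) /\
        (exists m : probability R R,
           excursion_metric Y1 Y2 m = (2 * (xstar - C xstar xstar))%:E))
     /\
     (forall xstar : R, 0 < xstar < 1 ->
        (forall x : R, 0 <= x <= 1 -> x - C x x <= xstar - C xstar xstar) ->
        let ustar := quantile (cdfR Y1) xstar in
        (forall m : probability R R,
           (excursion_metric Y1 Y2 m <= excursion_metric Y1 Y2 (\d_ustar))%E) /\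
        excursion_metric Y1 Y2 (\d_ustar) = (2 * (xstar - C xstar xstar))%:E)).
Proof.
move=> /abs_cont_atomless na1 /abs_cont_atomless na2 hC.
have [us usmax] := Delta_has_max na1 na2 hC.
split.
  exists us; split=> //; split; last exact: excursion_metric_dirac.
  by move=> m; exact: (excursion_metric_le na1 na2 hC m usmax).
move=> hd; have DeltaE u := Delta_same_law C u hd; split.
  exists (cdfR Y1 us); rewrite cdfR_ge0_le1 -DeltaE; split=> //; split.
    move=> x x01; have := diag_gap_le_Delta_max na1 hC hd usmax x01; rewrite DeltaE; lra.
  split; first by move=> m; exact: (excursion_metric_le na1 na2 hC m usmax).
  by exists \d_us; exact: (excursion_metric_dirac na1 na2 hC us).
move=> xs xs01 xsmax us'.
have Delta_us' : Delta Y1 Y2 C us' = 2 * (xs - C xs xs).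
  by rewrite DeltaE atomless_cdfR_quantileK.
rewrite (excursion_metric_dirac na1 na2 hC) Delta_us'; split=> // m.
apply: (excursion_metric_le na1 na2 hC) => u; rewrite DeltaE.
by have := xsmax _ (cdfR_ge0_le1 Y1 u); lra.
Qed.
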